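(* Let $\mathcal{N}\subset\mathbb{R}^d$ be compact, $T>0$, $x^0,x^1\in\mathbb{R}^N$, and let $\nu\mapsto(\mathbf{A}(\nu),\mathbf{B}(\nu))\in\mathbb{R}^{N\times N}\times\mathbb{R}^{N\times M}$ be Lipschitz continuous on $\mathcal{N}$. Assume the uniform controllability condition: there are constants $0<\Lambda_-\le\Lambda_+$ with $\Lambda_- I\le \Lambda_\nu\le\Lambda_+ I$ (as quadratic forms) for all $\nu\in\mathcal{N}$, where $\Lambda_\nu$ is the Gramian defined in the context. For $\nu\in\mathcal N$ let $\varphi^0_\nu\in\mathbb{R}^N$ be the unique solution of $\Lambda_\nu\varphi^0_\nu=x^1-e^{T\mathbf{A}_\nu}x^0$, and let $C_\varphi$ be the Lipschitz constant of the map $\nu\mapsto\varphi^0_\nu$. Given $\varepsilon>0$, run the offline greedy control algorithm (described in the context) with a discretisation constant $\delta$ satisfying $\delta\le \varepsilon/(2C_\varphi\Lambda_-)$, and suppose it selects $n\ge1$ parameter values $\nu_1,\dots,\nu_n$ with corresponding vectors $\varphi^0_j:=\varphi^0_{\nu_j}$; write $\Phi^0_j=\mathrm{span}\{\varphi^0_1,\dots,\varphi^0_j\}$. Then, with $\gamma=\Lambda_-/(2\Lambda_+)\le 1/2$, $$|\varphi^0_1|\ge\gamma\max_{\nu\in\mathcal N}|\varphi^0_\nu|,\qquad \mathrm{dist}(\varphi^0_{j+1},\Phi^0_j)\ge\gamma\max_{\nu\in\mathcal N}\mathrm{dist}(\varphi^0_\nu,\Phi^0_j)\ \ (j=1,\dots,n-1),$$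 i.e. the algorithm is a weak greedy algorithm with constant $\gamma$ for the compact set $\{\varphi^0_\nu:\nu\in\mathcal N\}$, and the final approximation error satisfies $$\max_{\nu\in\mathcal N}\mathrm{dist}(\varphi^0_\nu,\Phi^0_n)<\varepsilon/\Lambda_- .$$
   Context: Control system (for each parameter $\nu\in\mathcal N$): $x'(t)=\mathbf{A}_\nu x(t)+\mathbf{B}_\nu u(t)$, $0<t<T$, $x(0)=x^0$, with $\mathbf{A}_\nu=\mathbf{A}(\nu)$, $\mathbf{B}_\nu=\mathbf{B}(\nu)$. Its (controllability) Gramian is $\Lambda_\nu=\int_0^T e^{(T-t)\mathbf{A}_\nu}\mathbf{B}_\nu\mathbf{B}_\nu^{*}e^{(T-t)\mathbf{A}_\nu^{*}}\,dt$. The vector $\varphi^0_\nu=\Lambda_\nu^{-1}(x^1-e^{T\mathbf A_\nu}x^0)$ is the minimiser of $J_\nu(\varphi^0)=\frac12\int_0^T|\mathbf B_\nu^*\varphi(t)|^2dt-\langle x^1,\varphi^0\rangle+\langle x^0,\varphi(0)\rangle$, where $\varphi(t)=e^{(T-t)\mathbf A_\nu^*}\varphi^0$, and $u_\nu=\mathbf B_\nu^*e^{(T-t)\mathbf A_\nu^*}\varphi^0_\nu$ is the minimal $L^2$-norm control steering $x^0$ to $x^1$. For a subspace $\Phi\subset\mathbb R^N$, $\Lambda_\nu\Phi=\{\Lambda_\nu\psi:\psi\in\Phi\}$; $\mathrm{dist}$ is Euclidean distance. Offline greedy control algorithm with tolerance $\varepsilon>0$ and discretisation constant $\delta>0$: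 Step 1: choose a finite set $\tilde{\mathcal N}\subset\mathcal N$ with $\mathrm{dist}(\nu,\tilde{\mathcal N})<\delta$ for all $\nu\in\mathcal N$. Step 2: if $\max_{\tilde\nu\in\tilde{\mathcal N}}|x^1-e^{T\mathbf A_{\tilde\nu}}x^0|<\varepsilon/2$ stop (with $n=0$); otherwise let $\nu_1$ be a maximiser of $\tilde\nu\mapsto|x^1-e^{T\mathbf A_{\tilde\nu}}x^0|$ over $\tilde{\mathcal N}$ and set $\varphi^0_1=\varphi^0_{\nu_1}$. Step 3: having $\nu_1,\dots,\nu_j$, if $\max_{\tilde\nu\in\tilde{\mathcal N}}\mathrm{dist}(x^1-e^{T\mathbf A_{\tilde\nu}}x^0,\Lambda_{\tilde\nu}\Phi^0_j)<\varepsilon/2$ stop (with $n=j$); otherwise let $\nu_{j+1}$ be a maximiser over $\tilde{\mathcal N}$ of $\tilde\nu\mapsto \mathrm{dist}(x^1-e^{T\mathbf A_{\tilde\nu}}x^0,\Lambda_{\tilde\nu}\Phi^0_j)$, set $\varphi^0_{j+1}=\varphi^0_{\nu_{j+1}}$ and repeat Step 3. *)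

From HB Require Import structures.
From mathcomp Require Import all_boot all_order all_algebra.
From mathcomp Require Import all_classical all_reals all_analysis.
Set Implicit Arguments. Unset Strict Implicit. Unset Printing Implicit Defensive.
Import Order.TTheory GRing.Theory Num.Theory.
Import numFieldNormedType.Exports.
Local Open Scope classical_set_scope.
Local Open Scope ring_scope.

Definition enorm {R : realType} {n : nat} (x : 'cV[R]_n) : R :=
  Num.sqrt (\sum_(i < n) x i 0 ^+ 2).

Definition expm {R : realType} {n : nat} (A : 'M[R]_n) : 'M[R]_n :=
  \matrix_(i, j) (limn (series (fun k : nat => ((A ^+ k) i j / (k`!)%:R : R)))).

Definition gramian {R : realType} {N M : nat} (T : R)
    (A : 'M[R]_N) (B : 'M[R]_(N, M)) : 'M[R]_N :=
  \matrix_(i, j) Rintegral (@lebesgue_measure R) `[0%R, T]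
    (fun t => (expm ((T - t) *: A) *m B *m B^T *m expm ((T - t) *: A^T)) i j).

Definition phi0 {R : realType} {N M : nat} (T : R)
    (A : 'M[R]_N) (B : 'M[R]_(N, M)) (x0 x1 : 'cV[R]_N) : 'cV[R]_N :=
  invmx (gramian T A B) *m (x1 - expm (T *: A) *m x0).

Definition lincomb {R : realType} {N : nat} (v : nat -> 'cV[R]_N) (j : nat)
    (c : nat -> R) : 'cV[R]_N :=
  \sum_(i < j) c i *: v i.

Definition dist_span {R : realType} {N : nat} (x : 'cV[R]_N)
    (v : nat -> 'cV[R]_N) (j : nat) : R :=
  inf [set enorm (x - lincomb v j c) | c in [set: nat -> R]].

Definition dist_img_span {R : realType} {N : nat} (x : 'cV[R]_N) (L : 'M[R]_N)
    (v : nat -> 'cV[R]_N) (j : nat) : R :=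
  inf [set enorm (x - L *m lincomb v j c) | c in [set: nat -> R]].

From HB Require Import structures.
From mathcomp Require Import all_boot all_order all_algebra.
From mathcomp Require Import all_classical all_reals all_analysis.
From mathcomp Require Import lra.
Set Implicit Arguments. Unset Strict Implicit. Unset Printing Implicit Defensive.
Import Order.TTheory GRing.Theory Num.Theory.
Import numFieldNormedType.Exports.
Local Open Scope classical_set_scope.
Local Open Scope ring_scope.

(* Since [Lam_nu phi_nu = x1 - e^(T A_nu) x0] and
   [Lam_- |z| <= |Lam_nu z| <= Lam_+ |z|] (the upper bound by polarization,
   [Lam_nu] being symmetric), the quantity [dist(x1 - e^(T A_nu) x0, Lam_nu Phi)]
   maximised by the algorithm is a surrogate for the true error
   [dist(phi_nu, Phi)], equivalent to it up to the factors [Lam_-] and [Lam_+].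
   Passing from the delta-net to all parameters costs [Cphi delta] in the true
   error, hence at most [eps/2] in the surrogate; before the algorithm stops
   this is dominated by the selected surrogate value (whence the factor 2 in
   [gamma]), and when it stops it gives the final bound [eps / Lam_-]. *)

Section EuclideanSpace.
Variables (R : realType) (n : nat).
Implicit Types (x y z : 'cV[R]_n) (L : 'M[R]_n).

Definition vdot x y : R := (x^T *m y) 0 0.

Lemma vdotC x y : vdot x y = vdot y x.
Proof. by rewrite /vdot -(trmxK (y^T *m x)) trmx_mul trmxK [in RHS]mxE. Qed.

Lemma vdotDr x y z : vdot x (y + z) = vdot x y + vdot x z.
Proof. by rewrite /vdot mulmxDr mxE. Qed.

Lemma vdotNr x y : vdot x (- y) = - vdot x y.
Proof. by rewrite /vdot mulmxN mxE. Qed.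

Lemma vdotZr x a y : vdot x (a *: y) = a * vdot x y.
Proof. by rewrite /vdot -scalemxAr mxE. Qed.

Lemma vdotBr x y z : vdot x (y - z) = vdot x y - vdot x z.
Proof. by rewrite vdotDr vdotNr. Qed.

Lemma vdotDl x y z : vdot (y + z) x = vdot y x + vdot z x.
Proof. by rewrite vdotC vdotDr !(vdotC x). Qed.

Lemma vdotNl x y : vdot (- y) x = - vdot y x.
Proof. by rewrite vdotC vdotNr vdotC. Qed.

Lemma vdotZl x a y : vdot (a *: y) x = a * vdot y x.
Proof. by rewrite vdotC vdotZr vdotC. Qed.

Lemma vdotBl x y z : vdot (y - z) x = vdot y x - vdot z x.
Proof. by rewrite vdotC vdotBr !(vdotC x). Qed.

Lemma vdot_trmx L x y : vdot (L^T *m x) y = vdot x (L *m y).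
Proof. by rewrite /vdot trmx_mul trmxK mulmxA. Qed.

Lemma vdotxx x : vdot x x = \sum_(i < n) x i 0 ^+ 2.
Proof. by rewrite /vdot mxE; apply: eq_bigr => i _; rewrite mxE expr2. Qed.

Lemma vdotxx_ge0 x : 0 <= vdot x x.
Proof. by rewrite vdotxx; apply: sumr_ge0 => i _; exact: sqr_ge0. Qed.

Lemma vdotxx_eq0 x : vdot x x = 0 -> x = 0.
Proof.
rewrite vdotxx => /psumr_eq0P x0; apply/matrixP => i j; rewrite (ord1 j) mxE.
by apply/eqP; rewrite -sqrf_eq0; apply/eqP/x0 => // k _; exact: sqr_ge0.
Qed.

Lemma enorm_ge0 x : 0 <= enorm x.
Proof. exact: sqrtr_ge0. Qed.

Lemma enorm_sqr x : enorm x ^+ 2 = vdot x x.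
Proof. by rewrite /enorm -vdotxx sqr_sqrtr // vdotxx_ge0. Qed.

Lemma enorm_eq0 x : enorm x = 0 -> x = 0.
Proof. by move=> x0; apply: vdotxx_eq0; rewrite -enorm_sqr x0 expr0n. Qed.

Lemma vdot_sqr_le x y : vdot x y ^+ 2 <= vdot x x * vdot y y.
Proof.
have [y0|y0] := eqVneq (vdot y y) 0.
  rewrite (vdotxx_eq0 y0) -[0 : 'cV_n](scale0r 0) vdotZr mul0r.
  by rewrite expr0n /= mulr_ge0 // vdotxx_ge0.
have ypos : 0 < vdot y y by rewrite lt_def y0 vdotxx_ge0.
have := vdotxx_ge0 (vdot y y *: x - vdot x y *: y).
rewrite !(vdotBl, vdotBr, vdotZl, vdotZr) (vdotC y x) => h.
nra.
Qed.

Lemma cauchy_schwarz x y : vdot x y <= enorm x * enorm y.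
Proof.
apply: le_trans (ler_norm _) _.
by rewrite -sqrtr_sqr /enorm -!vdotxx -sqrtrM ?vdotxx_ge0 // ler_sqrt;
  [exact: vdot_sqr_le | rewrite mulr_ge0 // vdotxx_ge0].
Qed.

Lemma enormD x y : enorm (x + y) <= enorm x + enorm y.
Proof.
rewrite -(ler_pXn2r (_ : 0 < 2)%N) ?nnegrE ?addr_ge0 ?enorm_ge0 //.
have := cauchy_schwarz x y.
rewrite sqrrD !enorm_sqr !(vdotDl, vdotDr) (vdotC y x); lra.
Qed.

Lemma enorm_sub_le x y : enorm x <= enorm y + enorm (x - y).
Proof. by rewrite -{1}(subrK y x) addrC enormD. Qed.

Section CoerciveForm.
Variables (L : 'M[R]_n) (m : R).
Hypotheses (m_gt0 : 0 < m) (L_coercive : forall x, m * enorm x ^+ 2 <= vdot x (L *m x)).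

Lemma coercive_enorm_mulmx x : m * enorm x <= enorm (L *m x).
Proof.
have cs := cauchy_schwarz x (L *m x); have := L_coercive x.
have := enorm_ge0 x; have := enorm_ge0 (L *m x).
by have [->|x0] := eqVneq (enorm x) 0; [rewrite mulr0 | nra].
Qed.

Lemma coercive_unitmx : L \in unitmx.
Proof.
rewrite -unitmx_tr unitmxE unitfE; apply/negP => /det0P [v v0 vL].
have Lv : L *m v^T = 0 by rewrite -[L]trmxK -trmx_mul vL trmx0.
have := coercive_enorm_mulmx v^T; rewrite Lv.
have -> : enorm (0 : 'cV[R]_n) = 0 by rewrite /enorm big1 ?sqrtr0 // => i _; rewrite mxE expr0n.
rewrite pmulr_rle0 // => h.
have : enorm v^T = 0 by apply/le_anti; rewrite h enorm_ge0.
by move/enorm_eq0/eqP; rewrite trmx_eq0 (negPf v0).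
Qed.

End CoerciveForm.

Lemma sym_form_enorm_mulmx L p : L^T = L -> 0 < p ->
  (forall x, 0 <= vdot x (L *m x) <= p * enorm x ^+ 2) ->
  forall x, enorm (L *m x) <= p * enorm x.
Proof.
move=> Lsym p_gt0 Lb.
have polar y z : 2 * vdot y (L *m z) <= p * (vdot y y + vdot z z).
  (* polarization: [4 <y, L z> = q(y + z) - q(y - z) <= p |y + z|^2 <= 2 p (|y|^2 + |z|^2)] *)
  have Lyz : vdot z (L *m y) = vdot y (L *m z) by rewrite -vdot_trmx Lsym vdotC.
  have /andP[_ +] := Lb (y + z); have /andP[+ _] := Lb (y - z).
  have := vdotxx_ge0 (y - z).
  rewrite !enorm_sqr !mulmxDr mulmxN.
  rewrite !(vdotDl, vdotDr, vdotNl, vdotNr) Lyz (vdotC z y); nra.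
move=> x; have := polar (L *m x) (p *: x).
rewrite -scalemxAr !(vdotZl, vdotZr) -!enorm_sqr => h.
have : enorm (L *m x) ^+ 2 <= (p * enorm x) ^+ 2 by nra.
by rewrite ler_pXn2r ?nnegrE ?mulr_ge0 ?enorm_ge0 // ltW.
Qed.

Lemma sym_form_bounds L m p : L^T = L -> 0 < m -> m <= p ->
  (forall x, m * enorm x ^+ 2 <= vdot x (L *m x) <= p * enorm x ^+ 2) ->
  L \in unitmx /\ forall x, m * enorm x <= enorm (L *m x) <= p * enorm x.
Proof.
move=> Lsym m_gt0 mp Lb; have Llb x := proj1 (andP (Lb x)).
split; first exact: coercive_unitmx m_gt0 Llb.
move=> x; rewrite coercive_enorm_mulmx //=.
apply: sym_form_enorm_mulmx => // [|y]; first exact: lt_le_trans mp.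
case/andP: (Lb y) => lb ->; rewrite andbT (le_trans _ lb) //.
by rewrite mulr_ge0 ?exprn_ge0 ?enorm_ge0 // ltW.
Qed.

End EuclideanSpace.

Section Gramian.
Variable R : realType.

Lemma trmxX n (X : 'M[R]_n) k : (X ^+ k)^T = X^T ^+ k.
Proof.
elim: k => [|k IH]; first by rewrite !expr0 trmx1.
by rewrite exprS exprSr -IH -!mulmxE trmx_mul.
Qed.

Lemma expm_tr n (X : 'M[R]_n) : (expm X)^T = expm X^T.
Proof.
apply/matrixP => i j; rewrite !mxE.
by congr (limn (series _)); apply: funext => k; rewrite -trmxX mxE.
Qed.

Lemma gramian_tr N M T (A : 'M[R]_N) (B : 'M[R]_(N, M)) :
  (gramian T A B)^T = gramian T A B.
Proof.
apply/matrixP => i j; rewrite !mxE; congr (Rintegral _ _ _); apply: funext => t.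
rewrite -linearZ -expm_tr /=; set E := expm _.
have E_sym : (E *m B *m B^T *m E^T)^T = E *m B *m B^T *m E^T.
  by rewrite !trmx_mul !trmxK !mulmxA.
by rewrite -[in LHS]E_sym mxE.
Qed.

End Gramian.

Section DistanceToSpan.
Variables (R : realType) (N : nat) (v : nat -> 'cV[R]_N) (j : nat).
Implicit Types (x y : 'cV[R]_N) (L : 'M[R]_N).

Lemma inf_range_le (F : (nat -> R) -> R) c : (forall c, 0 <= F c) ->
  inf (range F) <= F c.
Proof. by move=> F0; apply: ge_inf; [exists 0 => _ [c' _ <-] | exists c]. Qed.

Lemma le_inf_range (F : (nat -> R) -> R) a : (forall c, a <= F c) ->
  a <= inf (range F).
Proof.
by move=> aF; apply: lb_le_inf; [exists (F (fun=> 0)), (fun=> 0) | move=> _ [c _ <-]].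
Qed.

Lemma range_lincomb0 (F : 'cV[R]_N -> R) :
  [set F (lincomb v 0 c) | c in [set: nat -> R]] = [set F 0].
Proof.
apply/seteqP; split=> [_ [c _ <-] | _ ->]; rewrite /lincomb ?big_ord0 //.
by exists (fun=> 0); rewrite ?big_ord0.
Qed.

Lemma dist_span0 x : dist_span x v 0 = enorm x.
Proof. by rewrite /dist_span (range_lincomb0 (fun y => enorm (x - y))) inf1 subr0. Qed.

Lemma dist_img_span0 x L : dist_img_span x L v 0 = enorm x.
Proof.
by rewrite /dist_img_span (range_lincomb0 (fun y => enorm (x - L *m y))) inf1 mulmx0 subr0.
Qed.

Lemma dist_span_sub_le x y : dist_span x v j <= dist_span y v j + enorm (x - y).
Proof.
rewrite -lerBlDr; apply: le_inf_range => c; rewrite lerBlDr.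
apply: le_trans (@inf_range_le (fun c => enorm (x - lincomb v j c)) c _) _.
  by move=> c'; exact: enorm_ge0.
by have := enorm_sub_le (x - lincomb v j c) (y - lincomb v j c); rewrite opprB addrA subrK.
Qed.

Lemma dist_img_span_mulmx L m p x : 0 < m -> 0 < p ->
  (forall z, m * enorm z <= enorm (L *m z) <= p * enorm z) ->
  m * dist_span x v j <= dist_img_span (L *m x) L v j <= p * dist_span x v j.
Proof.
move=> m_gt0 p_gt0 Lb.
have LB c : L *m x - L *m lincomb v j c = L *m (x - lincomb v j c) by rewrite mulmxBr.
apply/andP; split.
  apply: le_inf_range => c; rewrite LB.
  have /andP[+ _] := Lb (x - lincomb v j c); apply: le_trans.
  by rewrite ler_pM2l //; apply: inf_range_le => c'; exact: enorm_ge0.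
rewrite -ler_pdivrMl //; apply: le_inf_range => c; rewrite ler_pdivrMl //.
have /andP[_ +] := Lb (x - lincomb v j c); apply: le_trans.
by rewrite -LB; apply: inf_range_le => c'; exact: enorm_ge0.
Qed.

End DistanceToSpan.

Section SurrogateGreedy.
Variables (R : realType) (P : eqType) (S : set P) (net : seq P) (err est : P -> R).
Variables (m h eps : R).
Hypotheses (m_gt0 : 0 < m) (mh_le : m * h <= eps / 2).
Hypothesis net_sub : forall w, w \in net -> w \in S.
Hypothesis est_lb : forall w, w \in S -> m * err w <= est w.
Hypothesis net_dense : forall v, v \in S -> exists2 w, w \in net & err v <= err w + h.

Lemma surrogate_net_bound v : v \in S ->
  exists2 w, w \in net & m * err v <= est w + eps / 2.
Proof.
move=> vS; have [w wnet vw] := net_dense vS; exists w => //.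
have := est_lb (net_sub wnet) => ?.
rewrite -(ler_pM2l m_gt0) mulrDr in vw; have := mh_le; lra.
Qed.

Lemma surrogate_weak_greedy p w0 : 0 < p -> est w0 <= p * err w0 ->
  (forall w, w \in net -> est w <= est w0) -> eps / 2 <= est w0 ->
  forall v, v \in S -> m / (2 * p) * err v <= err w0.
Proof.
move=> p_gt0 est_ub w0_max w0_large v vS.
have [w wnet] := surrogate_net_bound vS; have := w0_max w wnet => ? ?.
rewrite mulrAC ler_pdivrMr ?mulr_gt0 //; lra.
Qed.

Lemma surrogate_stop_err :
  (forall w, w \in net -> est w < eps / 2) ->
  forall v, v \in S -> err v < eps / m.
Proof.
move=> net_small v vS; have [w wnet] := surrogate_net_bound vS.
have := net_small w wnet => ? ?; rewrite ltr_pdivlMr // mulrC; lra.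
Qed.

End SurrogateGreedy.

(* Parameters nu live in R^d = 'cV[R]_d; states in R^N = 'cV[R]_N.
   The greedy selections nu_1, ..., nu_n are  nu 0, ..., nu (n-1)  and
   Phi^0_j = span{phi0(nu 0), ..., phi0(nu (j-1))}. *)
Theorem theorem2 (R : realType) (d N M : nat) (Nset : set 'cV[R]_d)
  (T : R) (x0 x1 : 'cV[R]_N)
  (A : 'cV[R]_d -> 'M[R]_N) (B : 'cV[R]_d -> 'M[R]_(N, M))
  (Lam_m Lam_p Cphi eps delta : R)
  (Ntilde : seq 'cV[R]_d) (n : nat) (nu : nat -> 'cV[R]_d) :
  let phi := fun v : 'cV[R]_d => phi0 T (A v) (B v) x0 x1 in
  let Lam := fun v : 'cV[R]_d => gramian T (A v) (B v) in
  let r := fun v : 'cV[R]_d => x1 - expm (T *: A v) *m x0 in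
  let gamma := Lam_m / (2 * Lam_p) in
  (* setting *)
  compact Nset -> 0 < T ->
  (* nu |-> (A nu, B nu) is Lipschitz on Nset *)
  (exists LA : R, forall v w, v \in Nset -> w \in Nset ->
      `|A v - A w| <= LA * enorm (v - w)) ->
  (exists LB : R, forall v w, v \in Nset -> w \in Nset ->
      `|B v - B w| <= LB * enorm (v - w)) ->
  (* uniform controllability: Lam_m I <= Lam_nu <= Lam_p I as quadratic forms *)
  0 < Lam_m -> Lam_m <= Lam_p ->
  (forall v, v \in Nset -> forall x : 'cV[R]_N,
      Lam_m * enorm x ^+ 2 <= (x^T *m Lam v *m x) 0 0 /\
      (x^T *m Lam v *m x) 0 0 <= Lam_p * enorm x ^+ 2) ->
  (* Cphi is a Lipschitz constant of nu |-> phi^0_nu on Nset *)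
  0 < Cphi ->
  (forall v w, v \in Nset -> w \in Nset ->
      enorm (phi v - phi w) <= Cphi * enorm (v - w)) ->
  (* tolerance and discretisation constant *)
  0 < eps -> 0 < delta -> delta <= eps / (2 * Cphi * Lam_m) ->
  (* Step 1: finite delta-net Ntilde of Nset *)
  (forall w, w \in Ntilde -> w \in Nset) ->
  (forall v, v \in Nset -> exists2 w, w \in Ntilde & enorm (v - w) < delta) ->
  (* the algorithm selects n >= 1 parameters *)
  (1 <= n)%N ->
  (* Step 2: no stop at n = 0; nu_1 maximises |r| over Ntilde *)
  nu 0%N \in Ntilde ->
  (forall w, w \in Ntilde -> enorm (r w) <= enorm (r (nu 0%N))) ->
  eps / 2 <= enorm (r (nu 0%N)) ->
  (* Step 3, for j = 1, ..., n-1: no stop at j; nu_{j+1} is a maximiser *)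
  (forall j : nat, (1 <= j)%N -> (j < n)%N ->
      [/\ nu j \in Ntilde,
          (forall w, w \in Ntilde ->
             dist_img_span (r w) (Lam w) (phi \o nu) j <=
             dist_img_span (r (nu j)) (Lam (nu j)) (phi \o nu) j)
        & eps / 2 <= dist_img_span (r (nu j)) (Lam (nu j)) (phi \o nu) j]) ->
  (* Step 3 at j = n: the algorithm stops *)
  (forall w, w \in Ntilde ->
      dist_img_span (r w) (Lam w) (phi \o nu) n < eps / 2) ->
  (* conclusions: weak greedy with constant gamma, and final error bound *)
  [/\ gamma <= 1 / 2,
      (forall v, v \in Nset -> gamma * enorm (phi v) <= enorm (phi (nu 0%N))),
      (forall j : nat, (1 <= j)%N -> (j < n)%N -> forall v, v \in Nset ->
          gamma * dist_span (phi v) (phi \o nu) j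
            <= dist_span (phi (nu j)) (phi \o nu) j)
    & (forall v, v \in Nset ->
          dist_span (phi v) (phi \o nu) n < eps / Lam_m)].
Proof.
move=> phi Lam r gamma _ _ _ _ Lam_m_gt0 Lam_m_le_p Lam_form Cphi_gt0 phi_lip
  _ _ delta_le net_sub net_dense _ nu0_net nu0_max nu0_large
  greedy_step greedy_stop.
have Lam_p_gt0 : 0 < Lam_p := lt_le_trans Lam_m_gt0 Lam_m_le_p.
have Lam_bounds w : w \in Nset -> Lam w \in unitmx /\
    forall x, Lam_m * enorm x <= enorm (Lam w *m x) <= Lam_p * enorm x.
  move=> wN; apply: sym_form_bounds (gramian_tr _ _ _) Lam_m_gt0 Lam_m_le_p _ => x.
  by rewrite /vdot mulmxA; case: (Lam_form w wN x) => -> ->.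
have r_phi w : w \in Nset -> r w = Lam w *m phi w.
  by case/Lam_bounds=> Lam_unit _; rewrite /phi /phi0 mulmxA mulmxV ?mul1mx.
pose err j w := dist_span (phi w) (phi \o nu) j.
pose est j w := dist_img_span (r w) (Lam w) (phi \o nu) j.
have est_bounds j w : w \in Nset -> Lam_m * err j w <= est j w <= Lam_p * err j w.
  move=> wN; rewrite /est r_phi //.
  by apply: dist_img_span_mulmx => //; case: (Lam_bounds w wN).
have err_net j v : v \in Nset ->
    exists2 w, w \in Ntilde & err j v <= err j w + Cphi * delta.
  move=> vN; have [w wnet vw] := net_dense v vN; exists w => //.
  rewrite /err; apply: le_trans (dist_span_sub_le _ _ _ (phi w)) _; rewrite lerD2l.
  apply: le_trans (phi_lip v w vN (net_sub w wnet)) _.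
  by rewrite ler_pM2l // ltW.
have mh_le : Lam_m * (Cphi * delta) <= eps / 2.
  rewrite ler_pdivlMr ?mulr_gt0 // in delta_le; lra.
have greedy j w0 : w0 \in Ntilde -> (forall w, w \in Ntilde -> est j w <= est j w0) ->
    eps / 2 <= est j w0 -> forall v, v \in Nset -> gamma * err j v <= err j w0.
  move=> w0_net.
  apply: (surrogate_weak_greedy Lam_m_gt0 mh_le net_sub _ (err_net j) Lam_p_gt0).
  - by move=> w wN; case/andP: (est_bounds j w wN).
  - by case/andP: (est_bounds j w0 (net_sub w0 w0_net)).
split.
- by rewrite /gamma ler_pdivrMr ?mulr_gt0 //; lra.
- have err0 w : err 0%N w = enorm (phi w) by exact: dist_span0.
  have est0 w : est 0%N w = enorm (r w) by exact: dist_img_span0.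
  have nu0_max' w : w \in Ntilde -> est 0%N w <= est 0%N (nu 0%N).
    by rewrite !est0; exact: nu0_max.
  have nu0_large' : eps / 2 <= est 0%N (nu 0%N) by rewrite est0.
  move=> v vN; have := greedy 0%N _ nu0_net nu0_max' nu0_large' v vN.
  by rewrite !err0.
- by move=> j j1 jn; have [] := greedy_step j j1 jn; exact: greedy.
- apply: (surrogate_stop_err Lam_m_gt0 mh_le net_sub _ (err_net n) greedy_stop).
  by move=> w wN; case/andP: (est_bounds n w wN).
Qed.
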